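(* The derivative test $\mathcal{D}$ is reasonable and error-free.
   Context: Let $\Omega=\{0,1\}$ and let $\Omega^\infty$ be the set of infinite sequences $\omega=(\omega_1,\omega_2,\dots)$; $\omega^t=(\omega_1,\dots,\omega_t)$ denotes the prefix and also the cylinder set $\{\hat\omega:\hat\omega^t=\omega^t\}$; $\Omega^\infty$ carries the $\sigma$-algebra generated by cylinders. $\Delta(\Omega)$ is the set of probability distributions on $\Omega$. A forecasting strategy is a function $f:\bigcup_{t\ge 0}(\Omega\times\Delta(\Omega)\times\Delta(\Omega))^t\to\Delta(\Omega)$; $F$ is the set of all forecasting strategies. For $f=(f_0,f_1)$ and $\omega$, the play path $h=h(\omega,f_0,f_1)$ is defined by $h^0=\emptyset$, $h^t=(h^{t-1},(\omega_t,f_0(h^{t-1}),f_1(h^{t-1})))$. The induced measures satisfy $P_i^f(\omega^t)=\prod_{n=1}^t f_i(h^{n-1})[\omega_n]$, $i\in\{0,1\}$. A comparison test is a function $T:\Omega^\infty\times F\times F\to\{0,\tfrac12,1\}$, measurable in $\omega$ for each fixed pair; write $\{T(\cdot,f)=k\}=\{\omega:T(\omega,f_0,f_1)=k\}$. $T$ is error-free if for all $f$ and $i\in\{0,1\}$, $P_{1-i}^f(\{T(\cdot,f)=i\})=0$. $T$ is reasonable if for all $f$, $i\in\{0,1\}$ and measurable $A$: $P_i^f(A)>0$ and $P_{1-i}^f(A)=0$ imply $P_i^f(A\cap\{T(\cdot,f)=i\})>0$. Likelihood ratios (all along the play path $h=h(\omega,f_0,f_1)$): $D^t_{f_0}f_1(\omega)=\prod_{n=1}^t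 \frac{f_1(h^{n-1})[\omega_n]}{f_0(h^{n-1})[\omega_n]}$ and $D^t_{f_1}f_0(\omega)=\prod_{n=1}^t \frac{f_0(h^{n-1})[\omega_n]}{f_1(h^{n-1})[\omega_n]}$. For $(j,k)\in\{(0,1),(1,0)\}$, $\overline{D}_{f_j}f_k(\omega)=\limsup_t D^t_{f_j}f_k(\omega)$ and $\underline{D}_{f_j}f_k(\omega)=\liminf_t D^t_{f_j}f_k(\omega)$ if $f_j(h^{n-1})[\omega_n]>0$ for all $n$, and both equal $+\infty$ otherwise; if they coincide and are finite, the common value is the derivative $D_{f_j}f_k(\omega)$. The derivative test is $\mathcal{D}(\omega,f_0,f_1)=1$ if $D_{f_1}f_0(\omega)$ exists and equals $0$; $=0$ if $D_{f_0}f_1(\omega)$ exists and equals $0$; and $=\tfrac12$ otherwise. *)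

From Stdlib Require Import Reals List ClassicalDescription.
Import ListNotations.
Open Scope R_scope.

(* Omega = {0,1} is bool (false = 0, true = 1).
   An infinite sequence omega = (omega_1, omega_2, ...) is  w : nat -> bool
   with  w k = omega_{k+1}. *)
Definition seqw := nat -> bool.

(* Delta(Omega): a distribution on {0,1}, given by the probability of 1. *)
Record Dist := mkDist { dp : R ; dp_nonneg : 0 <= dp ; dp_le1 : dp <= 1 }.

Definition dprob (q : Dist) (x : bool) : R := if x then dp q else 1 - dp q.

(* Finite histories in (Omega x Delta x Delta)^t, oldest entry first. *)
Definition history := list (bool * Dist * Dist).

Definition strategy := history -> Dist.

Fixpoint hist (f0 f1 : strategy) (w : seqw) (t : nat) : history :=
  match t with
  | O => []
  | S t' => hist f0 f1 w t' ++ [(w t', f0 (hist f0 f1 w t'), f1 (hist f0 f1 w t'))]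
  end.

Definition sel (i : bool) (f0 f1 : strategy) : strategy := if i then f1 else f0.

(* f_i(h^{n-1})[omega_n] for n = k+1 *)
Definition fac (i : bool) (f0 f1 : strategy) (w : seqw) (k : nat) : R :=
  dprob (sel i f0 f1 (hist f0 f1 w k)) (w k).

Fixpoint prodn (g : nat -> R) (t : nat) : R :=
  match t with O => 1 | S t' => prodn g t' * g t' end.

Definition in_cyl (s : list bool) (w : seqw) : Prop :=
  forall k, (k < length s)%nat -> w k = nth k s false.

Definition word_seq (s : list bool) : seqw := fun k => nth k s false.

(* P_i^f(omega^t) = prod_{n=1}^t f_i(h^{n-1})[omega_n]  (h depends on w
   only through the prefix, so we evaluate along any extension). *)
Definition cylmass (i : bool) (f0 f1 : strategy) (s : list bool) : R :=
  prodn (fac i f0 f1 (word_seq s)) (length s).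

Inductive measurable : (seqw -> Prop) -> Prop :=
  | meas_cyl : forall s, measurable (in_cyl s)
  | meas_compl : forall A, measurable A -> measurable (fun w => ~ A w)
  | meas_union : forall A : nat -> seqw -> Prop,
      (forall n, measurable (A n)) -> measurable (fun w => exists n, A n w)
  | meas_ext : forall A B, (forall w, A w <-> B w) -> measurable A -> measurable B.

(* The measure P_i^f is the (Caratheodory) extension of the cylinder masses;
   its value on a set A is the infimum of  sum_n P(c_n)  over countable covers
   of A by cylinders.  We only need the two statements "P(A) = 0" and
   "P(A) > 0" about this infimum. *)
Definition covers (A : seqw -> Prop) (c : nat -> list bool) : Prop :=
  forall w, A w -> exists n, in_cyl (c n) w.

Definition psum (i : bool) (f0 f1 : strategy) (c : nat -> list bool) (N : nat) : R :=
  sum_f_R0 (fun n => cylmass i f0 f1 (c n)) N.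

Definition prob_zero (i : bool) (f0 f1 : strategy) (A : seqw -> Prop) : Prop :=
  forall eps, 0 < eps ->
    exists c, covers A c /\ forall N, psum i f0 f1 c N <= eps.

Definition prob_pos (i : bool) (f0 f1 : strategy) (A : seqw -> Prop) : Prop :=
  exists r, 0 < r /\
    forall c, covers A c -> exists N, r <= psum i f0 f1 c N.

(* Comparison tests take values in {0, 1/2, 1} (coded as reals). *)
Definition test := seqw -> strategy -> strategy -> R.

Definition bval (i : bool) : R := if i then 1 else 0.

Definition error_free (T : test) : Prop :=
  forall (f0 f1 : strategy) (i : bool),
    prob_zero (negb i) f0 f1 (fun w => T w f0 f1 = bval i).

Definition reasonable (T : test) : Prop :=
  forall (f0 f1 : strategy) (i : bool) (A : seqw -> Prop),
    measurable A ->
    prob_pos i f0 f1 A -> prob_zero (negb i) f0 f1 A ->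
    prob_pos i f0 f1 (fun w => A w /\ T w f0 f1 = bval i).

Definition lratio (j k : bool) (f0 f1 : strategy) (w : seqw) (t : nat) : R :=
  prodn (fun n => fac k f0 f1 w n / fac j f0 f1 w n) t.

(* The derivative D_{f_j} f_k (w) exists and equals L: all denominators are
   positive (otherwise limsup = liminf = +oo) and limsup = liminf = L finite,
   i.e. the ratio sequence converges to L. *)
Definition deriv_is (j k : bool) (f0 f1 : strategy) (w : seqw) (L : R) : Prop :=
  (forall n, 0 < fac j f0 f1 w n) /\ Un_cv (lratio j k f0 f1 w) L.

Definition dtest : test := fun w f0 f1 =>
  if excluded_middle_informative (deriv_is true false f0 f1 w 0) then 1
  else if excluded_middle_informative (deriv_is false true f0 f1 w 0) then 0
  else / 2.

(* The key estimate is that on a cylinder [s] reached with positive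
   [f_j]-probabilities, [P_k(s) = D^t_{f_j} f_k * P_j(s)].

   Error-freeness: on the event where [D_{f_j} f_k] tends to 0, stop each
   sequence at the first time the ratio drops below [eps].  The stopped
   prefixes are prefix-free, so their [P_j]-masses sum to at most 1 and their
   [P_k]-masses to at most [eps].

   Reasonableness: if [P_{1-i}(A) = 0], then [P_i]-almost every point of [A]
   has [D_{f_i} f_{1-i} -> 0].  Sequences along which some factor
   [f_i(h^{n-1})[w_n]] vanishes are [P_i]-null; on those where the ratio exceeds [d] infinitely
   often, stopping a [P_{1-i}]-small cover of [A] at the first ratio [>= d]
   yields a [P_i]-cover of mass at most [P_{1-i}/d].  Hence [A] and
   [A /\ T = i] carry the same positive [P_i]-mass. *)

From Stdlib Require Import Reals Lra Lia List Cantor.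
From Stdlib Require Import Classical ClassicalEpsilon ClassicalDescription.
Import ListNotations.
Open Scope R_scope.

Definition indic (P : Prop) (x : R) : R := if excluded_middle_informative P then x else 0.

Lemma indic_true (P : Prop) x : P -> indic P x = x.
Proof. intros H; unfold indic; destruct excluded_middle_informative; tauto. Qed.

Lemma indic_false (P : Prop) x : ~ P -> indic P x = 0.
Proof. intros H; unfold indic; destruct excluded_middle_informative; tauto. Qed.

Lemma sum_zero (a : nat -> R) N : (forall n, (n <= N)%nat -> a n = 0) -> sum_f_R0 a N = 0.
Proof.
  induction N; intros H; simpl; [apply H; lia|].
  rewrite IHN by (intros; apply H; lia). rewrite H by lia. ring.
Qed.

Lemma sum_indic_eq (a : nat -> R) k0 K : (k0 <= K)%nat ->
  sum_f_R0 (fun k => indic (k0 = k) (a k)) K = a k0.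
Proof.
  induction K; intros H; simpl.
  - replace k0 with 0%nat by lia. apply indic_true; auto.
  - destruct (Nat.eq_dec k0 (S K)) as [->|Hne].
    + rewrite sum_zero by (intros; apply indic_false; lia).
      rewrite indic_true by auto. ring.
    + rewrite IHK, indic_false by lia. ring.
Qed.

Lemma sum_swap (a : nat -> nat -> R) N K :
  sum_f_R0 (fun n => sum_f_R0 (a n) K) N = sum_f_R0 (fun k => sum_f_R0 (fun n => a n k) N) K.
Proof.
  induction N; simpl; auto.
  rewrite IHN, <- plus_sum. apply sum_eq. auto.
Qed.

Lemma sum_indic_unique_le (P : nat -> Prop) x N : 0 <= x ->
  (forall n m, (n <= N)%nat -> (m <= N)%nat -> P n -> P m -> n = m) ->
  sum_f_R0 (fun n => indic (P n) x) N <= x.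
Proof.
  intros Hx. induction N; intros Huniq; simpl.
  - unfold indic; destruct excluded_middle_informative; lra.
  - destruct (classic (P (S N))) as [HP|HP].
    + rewrite sum_zero; [rewrite indic_true by auto; lra|].
      intros n Hn. apply indic_false. intros Pn.
      assert (n = S N) by (apply Huniq; auto; lia). lia.
    + rewrite indic_false, Rplus_0_r by auto. apply IHN. intros; apply Huniq; auto; lia.
Qed.

Lemma sum_reindex_le (h : nat -> R) (Q : nat -> Prop) (sig : nat -> nat) N M :
  (forall j, 0 <= h j) ->
  (forall n, (n <= N)%nat -> Q n -> (sig n <= M)%nat) ->
  (forall n m, (n <= N)%nat -> (m <= N)%nat -> Q n -> Q m -> sig n = sig m -> n = m) ->
  sum_f_R0 (fun n => indic (Q n) (h (sig n))) N <= sum_f_R0 h M.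
Proof.
  intros Hh HM Hinj.
  rewrite (sum_eq _ (fun n => sum_f_R0 (fun j => indic (Q n /\ sig n = j) (h j)) M)).
  - rewrite sum_swap. apply sum_Rle. intros j Hj.
    apply sum_indic_unique_le; auto.
    intros n m Hn Hm [Qn En] [Qm Em]. apply Hinj; auto; congruence.
  - intros n Hn. destruct (classic (Q n)).
    + rewrite indic_true, <- (sum_indic_eq h (sig n) M) by auto.
      apply sum_eq. intros j Hj. unfold indic. do 2 destruct excluded_middle_informative; tauto.
    + rewrite indic_false by auto. symmetry. apply sum_zero. intros; apply indic_false; tauto.
Qed.

Lemma nat_fun_bounded (f : nat -> nat) N : exists D, forall n, (n <= N)%nat -> (f n <= D)%nat.
Proof.
  induction N as [|N [D HD]].
  - exists (f 0%nat). intros n Hn. replace n with 0%nat by lia. lia.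
  - exists (Nat.max D (f (S N))). intros n Hn.
    destruct (Nat.eq_dec n (S N)) as [->|]; [lia|]. specialize (HD n). lia.
Qed.

Lemma sum_half_pow K N : sum_f_R0 (fun n => (/2)^(n+K)) N = 2 * (/2)^K - (/2)^(N+K).
Proof. induction N; simpl; [field|]. rewrite IHN. simpl. field. Qed.

Lemma sum_half_pow_scal_le eps K : 0 <= eps -> sum_f_R0 (fun k => eps * (/2)^(k+1)) K <= eps.
Proof.
  intros He. rewrite (sum_eq _ (fun k => (/2)^(k+1) * eps)) by (intros; ring).
  rewrite <- scal_sum, sum_half_pow. pose proof (pow_le (/2) (K+1)). simpl. nra.
Qed.

Lemma half_pow_small eps : 0 < eps -> exists K, (/2)^K < eps.
Proof.
  intros H. destruct (pow_lt_1_zero (/2)) with eps as [K HK]; auto.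
  { rewrite Rabs_pos_eq; lra. }
  exists K. specialize (HK K (le_n K)).
  rewrite Rabs_pos_eq in HK; auto. apply pow_le; lra.
Qed.

Lemma least_witness (P : nat -> Prop) :
  (exists t, P t) -> exists t, P t /\ forall t', (t' < t)%nat -> ~ P t'.
Proof.
  intros [t Ht]. revert Ht.
  induction t as [t IH] using (well_founded_induction Wf_nat.lt_wf). intros Ht.
  destruct (classic (exists t', (t' < t)%nat /\ P t')) as [[t' [H1 H2]]|Hn].
  - apply (IH t' H1 H2).
  - exists t. split; auto. intros t' H1 H2. apply Hn. eauto.
Qed.

Lemma not_cv_zero_recurrent (u : nat -> R) : ~ Un_cv u 0 ->
  exists m, forall N, exists t, (N <= t)%nat /\ (/2)^m <= Rabs (u t).
Proof.
  intros Hncv. apply not_all_ex_not in Hncv as [e He].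
  apply imply_to_and in He as [He0 He1].
  destruct (half_pow_small e He0) as [m Hm]. exists m. intros N.
  apply not_ex_all_not with (n := N) in He1. apply not_all_ex_not in He1 as [t Ht].
  apply imply_to_and in Ht as [Ht1 Ht2]. exists t. split; auto.
  unfold R_dist in Ht2. rewrite Rminus_0_r in Ht2. lra.
Qed.

Definition pref (w : seqw) (t : nat) : list bool := map w (seq 0 t).

Lemma pref_length w t : length (pref w t) = t.
Proof. unfold pref. rewrite length_map, length_seq. auto. Qed.

Lemma pref_nth w t k : (k < t)%nat -> nth k (pref w t) false = w k.
Proof.
  intros H. unfold pref.
  rewrite nth_indep with (d' := w 0%nat) by (rewrite length_map, length_seq; auto).
  rewrite map_nth, seq_nth; auto.
Qed.

Lemma in_cyl_pref w t : in_cyl (pref w t) w.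
Proof. intros k Hk. rewrite pref_length in Hk. rewrite pref_nth; auto. Qed.

Lemma pref_cyl s w : in_cyl s w -> pref w (length s) = s.
Proof.
  intros H. apply nth_ext with (d := false) (d' := false); rewrite pref_length; auto.
  intros k Hk. rewrite pref_nth by auto. apply H; auto.
Qed.

Definition is_prefix (s t : list bool) : Prop := exists u, t = s ++ u.

Lemma is_prefix_length_eq s t : is_prefix s t -> (length t <= length s)%nat -> t = s.
Proof.
  intros [u ->] H. rewrite length_app in H.
  destruct u; [rewrite app_nil_r; auto | simpl in H; lia].
Qed.

Lemma is_prefix_snoc s t : is_prefix s t -> t <> s -> is_prefix (s ++ [nth (length s) t false]) t.
Proof.
  intros [[|b u] ->] H; [rewrite app_nil_r in H; tauto|].
  rewrite app_nth2, Nat.sub_diag by lia. exists u. rewrite <- app_assoc. auto.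
Qed.

Lemma is_prefix_pref s w t : in_cyl s w -> (length s <= t)%nat -> is_prefix s (pref w t).
Proof.
  intros H Ht. exists (map w (seq (length s) (t - length s))).
  rewrite <- (pref_cyl s w H) at 1. unfold pref. rewrite <- map_app. f_equal.
  replace t with (length s + (t - length s))%nat at 1 by lia. rewrite seq_app. auto.
Qed.

Lemma is_prefix_pref_inv w t w' t' : is_prefix (pref w t) (pref w' t') ->
  (t <= t')%nat /\ forall k, (k < t)%nat -> w k = w' k.
Proof.
  intros [u E].
  assert (Hl := f_equal (@length bool) E). rewrite length_app, !pref_length in Hl.
  split; [lia|]. intros k Hk.
  assert (Hk' := f_equal (fun l => nth k l false) E). simpl in Hk'.
  rewrite app_nth1 in Hk' by (rewrite pref_length; lia).
  rewrite !pref_nth in Hk' by lia. auto.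
Qed.

Lemma prodn_ext g g' t : (forall k, (k < t)%nat -> g k = g' k) -> prodn g t = prodn g' t.
Proof.
  induction t; intros H; simpl; auto.
  rewrite IHt by (intros; apply H; lia). rewrite H by lia. auto.
Qed.

Lemma prodn_nonneg g t : (forall k, 0 <= g k) -> 0 <= prodn g t.
Proof. intros H; induction t; simpl; [lra|]. apply Rmult_le_pos; auto. Qed.

Lemma prodn_div (a b : nat -> R) t : (forall n, (n < t)%nat -> 0 < b n) ->
  prodn a t = prodn (fun n => a n / b n) t * prodn b t.
Proof.
  induction t; intros H; simpl; [ring|]. rewrite IHt by (intros; apply H; lia).
  specialize (H t (Nat.lt_succ_diag_r t)). field. lra.
Qed.

Lemma dprob_nonneg q b : 0 <= dprob q b.
Proof. destruct q; unfold dprob; destruct b; simpl; lra. Qed.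

Section Masses.

Variables f0 f1 : strategy.

Lemma hist_local w v t : (forall k, (k < t)%nat -> w k = v k) ->
  hist f0 f1 w t = hist f0 f1 v t.
Proof.
  induction t; intros H; simpl; auto.
  rewrite IHt by (intros; apply H; lia). rewrite H by lia. reflexivity.
Qed.

Lemma fac_local i w v k : (forall m, (m <= k)%nat -> w m = v m) ->
  fac i f0 f1 w k = fac i f0 f1 v k.
Proof.
  intros H. unfold fac. rewrite (hist_local w v k) by (intros; apply H; lia).
  rewrite H by lia. reflexivity.
Qed.

Lemma lratio_local j k w v t : (forall n, (n < t)%nat -> w n = v n) ->
  lratio j k f0 f1 w t = lratio j k f0 f1 v t.
Proof.
  intros H. apply prodn_ext. intros n Hn.
  rewrite (fac_local k w v), (fac_local j w v); auto; intros; apply H; lia.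
Qed.

Lemma lratio_nonneg j k w t : (forall n, (n < t)%nat -> 0 < fac j f0 f1 w n) ->
  0 <= lratio j k f0 f1 w t.
Proof.
  unfold lratio. induction t; intros H; simpl; [lra|].
  apply Rmult_le_pos; [apply IHt; intros; apply H; lia|].
  pose proof (H t (Nat.lt_succ_diag_r t)).
  pose proof (dprob_nonneg (sel k f0 f1 (hist f0 f1 w t)) (w t)).
  unfold Rdiv. apply Rmult_le_pos; [auto | left; apply Rinv_0_lt_compat; auto].
Qed.

Lemma cylmass_nonneg i s : 0 <= cylmass i f0 f1 s.
Proof. apply prodn_nonneg. intros; apply dprob_nonneg. Qed.

Lemma cylmass_pref i w t : cylmass i f0 f1 (pref w t) = prodn (fac i f0 f1 w) t.
Proof.
  unfold cylmass. rewrite pref_length. apply prodn_ext. intros k Hk.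
  apply fac_local. intros m Hm. apply pref_nth. lia.
Qed.

Lemma cylmass_pref_lratio j k w t : (forall n, (n < t)%nat -> 0 < fac j f0 f1 w n) ->
  cylmass k f0 f1 (pref w t) = lratio j k f0 f1 w t * cylmass j f0 f1 (pref w t).
Proof. intros H. rewrite !cylmass_pref. apply prodn_div; auto. Qed.

Lemma cylmass_snoc i s b : cylmass i f0 f1 (s ++ [b]) =
  cylmass i f0 f1 s * dprob (sel i f0 f1 (hist f0 f1 (word_seq s) (length s))) b.
Proof.
  unfold cylmass. rewrite length_app, Nat.add_1_r. simpl prodn. f_equal.
  - apply prodn_ext. intros k Hk. apply fac_local. intros m Hm. unfold word_seq.
    rewrite app_nth1 by lia. auto.
  - unfold fac. rewrite (hist_local (word_seq (s ++ [b])) (word_seq s)).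
    + unfold word_seq at 2. rewrite app_nth2, Nat.sub_diag by lia. auto.
    + intros k Hk. unfold word_seq. rewrite app_nth1 by lia. auto.
Qed.

Lemma cylmass_split i s :
  cylmass i f0 f1 (s ++ [false]) + cylmass i f0 f1 (s ++ [true]) = cylmass i f0 f1 s.
Proof. rewrite !cylmass_snoc. unfold dprob. ring. Qed.

End Masses.

Fixpoint code (s : list bool) : nat :=
  match s with
  | [] => 0%nat
  | b :: s' => (2 * code s' + (if b then 2 else 1))%nat
  end.

Lemma code_inj s t : code s = code t -> s = t.
Proof.
  revert t; induction s as [|a s IH]; intros [|b t] H; simpl in H; auto.
  - destruct b; lia.
  - destruct a; lia.
  - destruct a, b; try lia; f_equal; apply IH; lia.
Qed.

Definition decode (n : nat) : list bool :=
  match excluded_middle_informative (exists s, code s = n) with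
  | left H => proj1_sig (constructive_indefinite_description _ H)
  | right _ => []
  end.

Lemma decode_code s : decode (code s) = s.
Proof.
  apply code_inj. unfold decode. destruct excluded_middle_informative as [H|H].
  - destruct constructive_indefinite_description; auto.
  - exfalso; eauto.
Qed.

Section Covers.

Variables (f0 f1 : strategy) (i : bool).

Local Notation mass := (cylmass i f0 f1).

Section PrefixFree.

Variables (g : nat -> list bool) (N : nat).

Let prefix_free (Q : nat -> Prop) := forall n m, (n <= N)%nat -> (m <= N)%nat ->
  Q n -> Q m -> is_prefix (g n) (g m) -> n = m.

Let family_sum (Q : nat -> Prop) := sum_f_R0 (fun n => indic (Q n) (mass (g n))) N.

Lemma prefix_free_sum_root c (Q : nat -> Prop) n0 :
  (forall n, (n <= N)%nat -> Q n -> is_prefix c (g n)) -> prefix_free Q ->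
  (n0 <= N)%nat -> Q n0 -> g n0 = c -> family_sum Q <= mass c.
Proof.
  intros Hext Hfree Hn0 Qn0 Gn0.
  assert (Honly : forall n, (n <= N)%nat -> Q n -> n = n0).
  { intros n Hn Qn. symmetry. apply Hfree; auto. rewrite Gn0. auto. }
  unfold family_sum. rewrite (sum_eq _ (fun n => indic (Q n) (mass c))).
  - apply sum_indic_unique_le; [apply cylmass_nonneg|].
    intros n m Hn Hm Qn Qm. rewrite (Honly n), (Honly m); auto.
  - intros n Hn. destruct (classic (Q n)) as [Qn|Qn].
    + rewrite !indic_true, (Honly n), Gn0; auto.
    + rewrite !indic_false; auto.
Qed.

Lemma prefix_free_sum_le d : forall c (Q : nat -> Prop),
  (forall n, (n <= N)%nat -> Q n -> is_prefix c (g n) /\ (length (g n) <= length c + d)%nat) ->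
  prefix_free Q -> family_sum Q <= mass c.
Proof.
  induction d as [|d IH]; intros c Q Hext Hfree;
    (destruct (classic (exists n0, (n0 <= N)%nat /\ Q n0 /\ g n0 = c)) as [[n0 [? [? ?]]]|Hc];
     [apply (prefix_free_sum_root c Q n0); auto; apply Hext|]).
  - unfold family_sum. rewrite sum_zero; [apply cylmass_nonneg|].
    intros n Hn. apply indic_false. intros Qn. destruct (Hext n Hn Qn) as [Hp Hl].
    apply Hc. exists n. repeat split; auto. apply is_prefix_length_eq; auto. lia.
  - set (Qb := fun (b : bool) n => Q n /\ nth (length c) (g n) false = b).
    assert (Hb : forall b, family_sum (Qb b) <= mass (c ++ [b])).
    { intros b. apply IH.
      - intros n Hn [Qn Bn]. destruct (Hext n Hn Qn) as [Hp Hl]. split.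
        + rewrite <- Bn. apply is_prefix_snoc; auto. intros E. apply Hc. exists n; auto.
        + rewrite length_app; simpl; lia.
      - intros n m Hn Hm [Qn _] [Qm _]. apply Hfree; auto. }
    rewrite <- (cylmass_split f0 f1 i c).
    apply Rle_trans with (family_sum (Qb false) + family_sum (Qb true));
      [|apply Rplus_le_compat; apply Hb].
    unfold family_sum. rewrite <- plus_sum. apply Req_le, sum_eq. intros n Hn. unfold Qb.
    destruct (classic (Q n)); [|rewrite !indic_false by tauto; ring].
    destruct (nth (length c) (g n) false);
      [rewrite (indic_false (_ /\ true = false)) | rewrite (indic_false (_ /\ false = true))];
      try (intros [_ X]; discriminate); rewrite !indic_true; auto; ring.
Qed.

End PrefixFree.

(* The total [P_i]-mass of the set of words [F] is at most [B]: finite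
   families are encoded by an index range [n <= N], a selector [Q] and a map
   [g] injective on the selected indices. *)
Definition mass_le (F : list bool -> Prop) (B : R) : Prop :=
  forall (g : nat -> list bool) (Q : nat -> Prop) N,
  (forall n, (n <= N)%nat -> Q n -> F (g n)) ->
  (forall n m, (n <= N)%nat -> (m <= N)%nat -> Q n -> Q m -> g n = g m -> n = m) ->
  sum_f_R0 (fun n => indic (Q n) (mass (g n))) N <= B.

Lemma prefix_free_mass_le c (F : list bool -> Prop) :
  (forall s, F s -> is_prefix c s) -> (forall s t, F s -> F t -> is_prefix s t -> s = t) ->
  mass_le F (mass c).
Proof.
  intros Hext Hfree g Q N HF Hinj.
  destruct (nat_fun_bounded (fun n => length (g n)) N) as [D HD].
  apply (prefix_free_sum_le g N D c Q).
  - intros n Hn Qn. split; [apply Hext, HF; auto | specialize (HD n Hn); lia].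
  - intros n m Hn Hm Qn Qm Hp. apply Hinj; auto; apply Hfree; auto.
Qed.

Definition outer_le (A : seqw -> Prop) (b : R) : Prop :=
  forall eps, 0 < eps -> exists c, covers A c /\ forall N, psum i f0 f1 c N <= b + eps.

Lemma outer_le_mono (A B : seqw -> Prop) b b' : (forall w, A w -> B w) -> b <= b' ->
  outer_le B b -> outer_le A b'.
Proof.
  intros HAB Hb HB eps He. destruct (HB eps He) as [c [Hc Hs]]. exists c. split.
  - intros w Aw; apply Hc, HAB; auto.
  - intros N; specialize (Hs N); lra.
Qed.

Lemma prob_zero_outer_le A : prob_zero i f0 f1 A <-> outer_le A 0.
Proof.
  split; intros H eps He; destruct (H eps He) as [c [Hc Hs]];
    exists c; split; auto; intros N; specialize (Hs N); lra.
Qed.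

Lemma prob_zero_of_outer_le A : (forall eps, 0 < eps -> outer_le A eps) -> prob_zero i f0 f1 A.
Proof.
  intros H eps He. destruct (H (eps/2) ltac:(lra) (eps/2) ltac:(lra)) as [c [Hc Hs]].
  exists c; split; auto. intros N; specialize (Hs N); lra.
Qed.

Lemma prob_zero_mono (A B : seqw -> Prop) : (forall w, A w -> B w) ->
  prob_zero i f0 f1 B -> prob_zero i f0 f1 A.
Proof.
  rewrite !prob_zero_outer_le. intros H. apply outer_le_mono; auto. lra.
Qed.

(* Unused indices of a cover are filled with cylinders of geometrically small mass. *)
Fixpoint light_word (L : nat) : list bool :=
  match L with
  | O => []
  | S L' =>
      let s := light_word L' in
      let q := sel i f0 f1 (hist f0 f1 (word_seq s) (length s)) in
      s ++ [if Rle_dec (dp q) (/2) then true else false]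
  end.

Lemma light_word_mass L : mass (light_word L) <= (/2)^L.
Proof.
  induction L; simpl; [unfold cylmass; simpl; lra|].
  rewrite cylmass_snoc. set (q := sel i f0 f1 _). set (b := if Rle_dec _ _ then _ else _).
  assert (dprob q b <= /2) by (unfold b, dprob; destruct Rle_dec; lra).
  pose proof (cylmass_nonneg f0 f1 i (light_word L)). pose proof (dprob_nonneg q b).
  rewrite Rmult_comm. apply Rmult_le_compat; auto.
Qed.

Lemma outer_le_of_prefixes (A : seqw -> Prop) (F : list bool -> Prop) B :
  (forall w, A w -> exists t, F (pref w t)) -> mass_le F B -> outer_le A B.
Proof.
  intros HA HB eps He. destruct (half_pow_small (eps/2)) as [K HK]; [lra|].
  set (P := fun n => F (decode n) /\ code (decode n) = n).
  exists (fun n => if excluded_middle_informative (P n) then decode n else light_word (n + K)).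
  split.
  - intros w Aw. destruct (HA w Aw) as [t Ft]. exists (code (pref w t)).
    destruct excluded_middle_informative as [_|nP].
    + rewrite decode_code. apply in_cyl_pref.
    + exfalso; apply nP. unfold P. rewrite decode_code. auto.
  - intros N. unfold psum.
    apply Rle_trans with (sum_f_R0 (fun n => indic (P n) (mass (decode n))) N +
                          sum_f_R0 (fun n => (/2)^(n+K)) N).
    + rewrite <- plus_sum. apply sum_Rle. intros n Hn.
      pose proof (light_word_mass (n+K)). pose proof (pow_le (/2) (n+K)).
      destruct excluded_middle_informative.
      * rewrite indic_true by auto. lra.
      * rewrite indic_false by auto. lra.
    + rewrite sum_half_pow.
      assert (sum_f_R0 (fun n => indic (P n) (mass (decode n))) N <= B).
      { apply HB.
        - intros n _ [Fn _]; auto.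
        - intros n m _ _ [_ Cn] [_ Cm] E. rewrite <- Cn, <- Cm, E; auto. }
      pose proof (pow_le (/2) (N+K)). lra.
Qed.

Lemma outer_le_countable_union (A : nat -> seqw -> Prop) (b : nat -> R) beta :
  (forall K, sum_f_R0 b K <= beta) -> (forall k, outer_le (A k) (b k)) ->
  outer_le (fun w => exists k, A k w) beta.
Proof.
  intros Hb HA eps He.
  assert (HC : forall k, exists c, covers (A k) c /\
                 forall N, psum i f0 f1 c N <= b k + eps * (/2)^(k+1)).
  { intros k. apply HA. apply Rmult_lt_0_compat; auto. apply pow_lt; lra. }
  apply choice in HC as [C HC].
  exists (fun n => C (fst (of_nat n)) (snd (of_nat n))). split.
  - intros w [k Akw]. destruct (proj1 (HC k) w Akw) as [j Hj]. exists (to_nat (k, j)).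
    rewrite cancel_of_to. auto.
  - intros N. destruct (nat_fun_bounded (fun n => fst (of_nat n)) N) as [K HK].
    destruct (nat_fun_bounded (fun n => snd (of_nat n)) N) as [M HM].
    unfold psum.
    rewrite (sum_eq _ (fun n => sum_f_R0 (fun k =>
               indic (fst (of_nat n) = k) (mass (C k (snd (of_nat n))))) K))
      by (intros n Hn; rewrite (sum_indic_eq (fun k => mass (C k (snd (of_nat n))))); auto).
    rewrite sum_swap.
    apply Rle_trans with (sum_f_R0 (fun k => b k + eps * (/2)^(k+1)) K).
    + apply sum_Rle. intros k Hk. eapply Rle_trans; [|apply (proj2 (HC k) M)].
      apply (sum_reindex_le (fun j => mass (C k j)) (fun n => fst (of_nat n) = k)
                            (fun n => snd (of_nat n))).
      * intros; apply cylmass_nonneg.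
      * intros n Hn _. apply HM; auto.
      * intros n m _ _ E1 E2 E3. rewrite <- (cancel_to_of n), <- (cancel_to_of m).
        f_equal. destruct (of_nat n), (of_nat m); simpl in *; congruence.
    + rewrite plus_sum. pose proof (Hb K). pose proof (sum_half_pow_scal_le eps K). lra.
Qed.

Definition interleave (c c' : nat -> list bool) (n : nat) : list bool :=
  if Nat.even n then c (Nat.div2 n) else c' (Nat.div2 n).

Lemma interleave_even c c' n : interleave c c' (2 * n) = c n.
Proof.
  unfold interleave. rewrite Nat.even_even, Nat.div2_double. auto.
Qed.

Lemma interleave_odd c c' n : interleave c c' (2 * n + 1) = c' n.
Proof.
  unfold interleave. rewrite Nat.even_odd, Nat.add_1_r, Nat.div2_succ_double. auto.
Qed.

Lemma psum_interleave_le c c' N :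
  psum i f0 f1 (interleave c c') N <= psum i f0 f1 c N + psum i f0 f1 c' N.
Proof.
  assert (Hhalf : forall (c0 : nat -> list bool) (b : bool),
    sum_f_R0 (fun n => indic (Nat.even n = b) (mass (c0 (Nat.div2 n)))) N <= psum i f0 f1 c0 N).
  { intros c0 b. apply (sum_reindex_le (fun j => mass (c0 j)) (fun n => Nat.even n = b) Nat.div2).
    - intros; apply cylmass_nonneg.
    - intros n Hn _. pose proof (Nat.le_div2_diag_l n). lia.
    - intros n m _ _ En Em E. rewrite (Nat.div2_odd n), (Nat.div2_odd m).
      rewrite <- !Nat.negb_even, En, Em, E. auto. }
  unfold psum at 1, interleave.
  rewrite (sum_eq _ (fun n => indic (Nat.even n = true) (mass (c (Nat.div2 n))) +
                              indic (Nat.even n = false) (mass (c' (Nat.div2 n))))).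
  - rewrite plus_sum. apply Rplus_le_compat; apply Hhalf.
  - intros n _. destruct (Nat.even n).
    + rewrite indic_true, indic_false by congruence. ring.
    + rewrite indic_false, indic_true by congruence. ring.
Qed.

Lemma prob_pos_inter (A B : seqw -> Prop) : prob_pos i f0 f1 A ->
  prob_zero i f0 f1 (fun w => A w /\ ~ B w) -> prob_pos i f0 f1 (fun w => A w /\ B w).
Proof.
  intros [r [Hr HA]] Hnull. exists (r/2). split; [lra|]. intros c Hc.
  destruct (Hnull (r/4) ltac:(lra)) as [c' [Hc' Hs']].
  destruct (HA (interleave c c')) as [N HN].
  - intros w Aw. destruct (classic (B w)) as [Bw|Bw].
    + destruct (Hc w (conj Aw Bw)) as [n Hn]. exists (2 * n)%nat. rewrite interleave_even. auto.
    + destruct (Hc' w (conj Aw Bw)) as [n Hn]. exists (2 * n + 1)%nat. rewrite interleave_odd. auto.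
  - exists N. pose proof (psum_interleave_le c c' N). specialize (Hs' N). lra.
Qed.

End Covers.

Definition first_hit (P : seqw -> nat -> Prop) (t0 : nat) (s : list bool) : Prop :=
  exists w t, s = pref w t /\ (t0 <= t)%nat /\ P w t /\
    forall t', (t0 <= t')%nat -> (t' < t)%nat -> ~ P w t'.

Lemma first_hit_exists (P : seqw -> nat -> Prop) t0 w :
  (exists t, (t0 <= t)%nat /\ P w t) -> exists t, (t0 <= t)%nat /\ first_hit P t0 (pref w t).
Proof.
  intros Hex. destruct (least_witness (fun t => (t0 <= t)%nat /\ P w t) Hex)
    as [t [[Ht0 Ht] Hmin]].
  exists t. split; auto. exists w, t. repeat split; auto. intros t' H1 H2 H3. apply (Hmin t'); auto.
Qed.

Lemma first_hit_prefix_free (P : seqw -> nat -> Prop) t0 :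
  (forall w v t, (forall n, (n < t)%nat -> w n = v n) -> P w t -> P v t) ->
  forall s s', first_hit P t0 s -> first_hit P t0 s' -> is_prefix s s' -> s = s'.
Proof.
  intros Hloc s s' [w [t [-> [Ht0 [Ht _]]]]] [w' [t' [-> [_ [_ Hmin']]]]] Hp.
  destruct (is_prefix_pref_inv w t w' t' Hp) as [Htt Hagree].
  assert (t = t').
  { destruct (Nat.eq_dec t t'); auto. exfalso. apply (Hmin' t); [lia|lia|].
    apply (Hloc w); auto. }
  subst t'. symmetry. apply is_prefix_length_eq; auto. rewrite !pref_length; auto.
Qed.

Lemma mass_le_scale f0 f1 a b (F : list bool -> Prop) lam B : 0 <= lam ->
  (forall s, F s -> cylmass a f0 f1 s <= lam * cylmass b f0 f1 s) ->
  mass_le f0 f1 b F B -> mass_le f0 f1 a F (lam * B).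
Proof.
  intros Hlam Hs HB g Q N HF Hinj.
  apply Rle_trans with (lam * sum_f_R0 (fun n => indic (Q n) (cylmass b f0 f1 (g n))) N);
    [|apply Rmult_le_compat_l; auto].
  rewrite scal_sum. apply sum_Rle. intros n Hn. destruct (classic (Q n)) as [Qn|Qn].
  - rewrite !indic_true by auto. rewrite Rmult_comm. apply Hs, HF; auto.
  - rewrite !indic_false by auto. lra.
Qed.

Section LikelihoodRatio.

Variables f0 f1 : strategy.

Definition ratio_event j k (Rel : R -> Prop) (w : seqw) (t : nat) : Prop :=
  (forall n, (n < t)%nat -> 0 < fac j f0 f1 w n) /\ Rel (lratio j k f0 f1 w t).

Lemma ratio_event_local j k Rel w v t : (forall n, (n < t)%nat -> w n = v n) ->
  ratio_event j k Rel w t -> ratio_event j k Rel v t.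
Proof.
  intros Hagree [Hpos HRel]. split.
  - intros n Hn. rewrite <- (fac_local f0 f1 j w v); auto. intros; apply Hagree; lia.
  - rewrite <- (lratio_local f0 f1 j k w v); auto.
Qed.

Lemma prob_zero_deriv_zero j k : prob_zero k f0 f1 (fun w => deriv_is j k f0 f1 w 0).
Proof.
  apply prob_zero_of_outer_le. intros eps He.
  set (P := ratio_event j k (fun r => r < eps)).
  apply (outer_le_of_prefixes _ _ _ _ (first_hit P 0)).
  - intros w [Hpos Hcv].
    destruct (Hcv eps He) as [N HN]. specialize (HN N (le_n N)).
    unfold R_dist in HN. rewrite Rminus_0_r in HN.
    pose proof (Rle_abs (lratio j k f0 f1 w N)).
    destruct (first_hit_exists P 0 w) as [t [_ Ht]]; [|exists t; auto].
    exists N. split; [lia|]. split; auto. lra.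
  - replace eps with (eps * cylmass j f0 f1 []) by (unfold cylmass; simpl; ring).
    apply (mass_le_scale f0 f1 k j); [lra| |].
    + intros s [w [t [-> [_ [[Hpos Hr] _]]]]].
      rewrite (cylmass_pref_lratio f0 f1 j k) by auto.
      pose proof (cylmass_nonneg f0 f1 j (pref w t)). nra.
    + apply prefix_free_mass_le; [intros s _; exists s; auto|].
      apply first_hit_prefix_free. apply ratio_event_local.
Qed.


Lemma outer_le_ratio_recurrent i j (A : seqw -> Prop) d b : 0 < d -> 0 < b ->
  prob_zero j f0 f1 A ->
  outer_le f0 f1 i (fun w => A w /\ (forall n, 0 < fac i f0 f1 w n) /\
     forall N, exists t, (N <= t)%nat /\ d <= Rabs (lratio i j f0 f1 w t)) b.
Proof.
  intros Hd Hb HA. destruct (HA (b * d) ltac:(nra)) as [c [Hc Hs]].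
  set (P := ratio_event i j (fun r => d <= Rabs r)).
  set (F := fun k s => is_prefix (c k) s /\ first_hit P (length (c k)) s).
  apply outer_le_mono with (B := fun w => exists k t, F k (pref w t)) (b := b); [|lra|].
  { intros w [Aw [Hpos Hinf]]. destruct (Hc w Aw) as [k Hk]. exists k.
    destruct (first_hit_exists P (length (c k)) w) as [t [Ht Hhit]].
    - destruct (Hinf (length (c k))) as [t Ht]. exists t. split; [apply Ht|].
      split; [intros; apply Hpos | apply Ht].
    - exists t. split; auto. apply is_prefix_pref; auto. }
  apply (outer_le_countable_union f0 f1 i _ (fun k => / d * cylmass j f0 f1 (c k))).
  - intros K. rewrite (sum_eq _ (fun k => cylmass j f0 f1 (c k) * / d)) by (intros; ring).
    rewrite <- scal_sum. specialize (Hs K). unfold psum in Hs.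
    apply Rle_trans with (/d * (b * d)).
    + apply Rmult_le_compat_l; auto. left; apply Rinv_0_lt_compat; auto.
    + right. field. lra.
  - intros k. apply (outer_le_of_prefixes _ _ _ _ (F k)); auto.
    apply (mass_le_scale f0 f1 i j); [left; apply Rinv_0_lt_compat; auto| |].
    + intros s [_ [w [t [-> [_ [[Hpos Hr] _]]]]]].
      rewrite (cylmass_pref_lratio f0 f1 i j) by auto.
      rewrite Rabs_pos_eq in Hr by (apply lratio_nonneg; auto).
      pose proof (cylmass_nonneg f0 f1 i (pref w t)).
      apply (Rmult_le_reg_l d); auto. rewrite <- Rmult_assoc, Rinv_r by lra. nra.
    + apply prefix_free_mass_le; [intros s [Hp _]; auto|].
      intros s s' [_ Hs1] [_ Hs2]. apply (first_hit_prefix_free P (length (c k))); auto.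
      apply ratio_event_local.
Qed.

Lemma prob_zero_fac_zero i : prob_zero i f0 f1 (fun w => exists n, fac i f0 f1 w n = 0).
Proof.
  apply prob_zero_outer_le.
  apply (outer_le_of_prefixes _ _ _ _ (fun s => cylmass i f0 f1 s = 0)).
  - intros w [n Hn]. exists (S n). rewrite cylmass_pref. simpl. rewrite Hn. ring.
  - intros g Q N HF _. right. apply sum_zero. intros n Hn.
    destruct (classic (Q n)); [rewrite indic_true; auto | rewrite indic_false; auto].
Qed.

Lemma prob_zero_not_deriv_zero i j (A : seqw -> Prop) : prob_zero j f0 f1 A ->
  prob_zero i f0 f1 (fun w => A w /\ ~ deriv_is i j f0 f1 w 0).
Proof.
  intros HA. apply prob_zero_of_outer_le. intros eps He.
  set (Z := fun w => exists n, fac i f0 f1 w n = 0).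
  set (Rec := fun (m : nat) w => A w /\ (forall n, 0 < fac i f0 f1 w n) /\
     forall N, exists t, (N <= t)%nat /\ (/2)^m <= Rabs (lratio i j f0 f1 w t)).
  set (B := fun k w => match k with O => Z w | S m => Rec m w end).
  apply outer_le_mono with (B := fun w => exists k, B k w) (b := eps); [|lra|].
  - intros w [Aw Hnd]. destruct (classic (Z w)) as [Zw|nZ]; [exists 0%nat; auto|].
    assert (Hpos : forall n, 0 < fac i f0 f1 w n).
    { intros n. destruct (dprob_nonneg (sel i f0 f1 (hist f0 f1 w n)) (w n)); auto.
      exfalso. apply nZ. exists n. auto. }
    destruct (not_cv_zero_recurrent (lratio i j f0 f1 w)) as [m Hm].
    + intros Hcv. apply Hnd. split; auto.
    + exists (S m). simpl. unfold Rec. auto.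
  - apply (outer_le_countable_union f0 f1 i B (fun k => eps * (/2)^(k+1))).
    + intros K. apply sum_half_pow_scal_le. lra.
    + intros [|m].
      * apply outer_le_mono with (B := Z) (b := 0); auto; [simpl; lra|].
        apply prob_zero_outer_le, prob_zero_fac_zero.
      * apply outer_le_ratio_recurrent; auto.
        -- apply pow_lt; lra.
        -- apply Rmult_lt_0_compat; auto. apply pow_lt; lra.
Qed.

Lemma deriv_zero_not_both j k w : deriv_is j k f0 f1 w 0 -> ~ deriv_is k j f0 f1 w 0.
Proof.
  intros [Hj Cj] [Hk Ck].
  assert (Hinv : forall t, lratio j k f0 f1 w t * lratio k j f0 f1 w t = 1).
  { unfold lratio. induction t; simpl; [ring|]. rewrite <- IHt.
    specialize (Hj t). specialize (Hk t). field. lra. }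
  assert (C1 : Un_cv (fun t => lratio j k f0 f1 w t * lratio k j f0 f1 w t) 1).
  { intros e He. exists 0%nat. intros n _. rewrite Hinv. unfold R_dist.
    rewrite Rminus_diag, Rabs_R0. auto. }
  pose proof (UL_sequence _ _ _ (CV_mult _ _ _ _ Cj Ck) C1). lra.
Qed.

Lemma dtest_bval i w : dtest w f0 f1 = bval i -> deriv_is i (negb i) f0 f1 w 0.
Proof.
  unfold dtest. destruct i; simpl;
    repeat destruct excluded_middle_informative; auto; intros; lra.
Qed.

Lemma dtest_not_bval i w : dtest w f0 f1 <> bval i -> ~ deriv_is i (negb i) f0 f1 w 0.
Proof.
  unfold dtest. destruct i; simpl;
    repeat destruct excluded_middle_informative; intros Hne Hd; auto;
    try (apply Hne; reflexivity); eapply deriv_zero_not_both; eauto.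
Qed.

End LikelihoodRatio.

Theorem theorem1 : reasonable dtest /\ error_free dtest.
Proof.
  split.
  -
    intros f0 f1 i A _ Hpos Hnull. apply prob_pos_inter; auto.
    apply prob_zero_mono with (fun w => A w /\ ~ deriv_is i (negb i) f0 f1 w 0).
    + intros w [Aw HT]. split; auto. apply dtest_not_bval; auto.
    + apply prob_zero_not_deriv_zero; auto.
  - intros f0 f1 i. apply prob_zero_mono with (fun w => deriv_is i (negb i) f0 f1 w 0).
    + apply dtest_bval.
    + apply prob_zero_deriv_zero.
Qed.
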